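(* Let $X$ and $Y$ be independent random variables, each symmetric about $0$ (i.e. $X\overset{d}{=}-X$, $Y\overset{d}{=}-Y$). If $|X|\le_{\mathrm{st}}|Y|$, then $$|X|\le_{\mathrm{st}}|\min(X,Y)|\overset{d}{=}|\max(X,Y)|\le_{\mathrm{st}}|Y|.$$ These stochastic inequalities are strict if and only if $|X|<_{\mathrm{st}}|Y|$.
   Context: For random variables $U,V$, $U\le_{\mathrm{st}}V$ means $F_U(x)\ge F_V(x)$ for all real $x$ ($F$ the cdf), and $U<_{\mathrm{st}}V$ means additionally $F_U(x)>F_V(x)$ for at least one $x$. *)

From HB Require Import structures.
From mathcomp Require Import all_boot all_order all_algebra.
From mathcomp Require Import all_classical all_reals all_analysis.
Set Implicit Arguments. Unset Strict Implicit. Unset Printing Implicit Defensive.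
Import Order.TTheory GRing.Theory Num.Theory.
Local Open Scope classical_set_scope.
Local Open Scope ring_scope.

(* cdf of a real-valued function on a probability space:
   F_U(x) = P(U <= x)  (same as the library's [cdf] = distribution P U `]-oo,x],
   but for plain functions, so it applies to |X|, |min(X,Y)|, ...). *)
Definition fcdf d (T : measurableType d) (R : realType) (P : probability T R)
  (U : T -> R) (x : R) : \bar R := P (U @^-1` `]-oo, x]).

Definition st_le d (T : measurableType d) (R : realType) (P : probability T R)
  (U V : T -> R) : Prop := forall x : R, (fcdf P V x <= fcdf P U x)%E.

Definition st_lt d (T : measurableType d) (R : realType) (P : probability T R)
  (U V : T -> R) : Prop :=
  st_le P U V /\ exists x : R, (fcdf P V x < fcdf P U x)%E.

Definition eq_dist d (T : measurableType d) (R : realType) (P : probability T R)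
  (U V : T -> R) : Prop :=
  forall A : set R, measurable A -> P (U @^-1` A) = P (V @^-1` A).

Definition indep2 d (T : measurableType d) (R : realType) (P : probability T R)
  (X Y : T -> R) : Prop :=
  forall A B : set R, measurable A -> measurable B ->
    P (X @^-1` A `&` Y @^-1` B) = (P (X @^-1` A) * P (Y @^-1` B))%E.

From HB Require Import structures.
From mathcomp Require Import all_boot all_order all_algebra.
From mathcomp Require Import all_classical all_reals all_analysis.
From mathcomp Require Import ring lra.
Import Order.TTheory GRing.Theory Num.Theory.
Local Open Scope classical_set_scope.
Local Open Scope ring_scope.

(* Write a = F_|X|(t) and b = F_|Y|(t) with t >= 0.  By symmetry
   P(X > t) = (1 - a)/2 and P(Y >= -t) = (1 + b)/2, and the event
   {|min(X,Y)| <= t} is the disjoint union of {|X| <= t, Y >= -t} and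
   {X > t, |Y| <= t}, so independence gives
   F_|min(X,Y)|(t) = a(1 + b)/2 + (1 - a)b/2 = (a + b)/2.
   As |max(X,Y)| = |min(-X,-Y)| and (-X,-Y) is again an independent symmetric
   pair, F_|max(X,Y)| is the same midpoint of F_|X| >= F_|Y|.  Everything
   follows: cdfs determine distributions, and the midpoint lies strictly
   between F_|X| and F_|Y| exactly where they differ. *)

Lemma abs_min_le (R : realDomainType) (x y t : R) :
  (`|Num.min x y| <= t) =
  ((-t <= x <= t) && (-t <= y)) || ((t < x) && (-t <= y <= t)).
Proof.
rewrite ler_norml le_min ge_min.
by case: (lerP (-t) x); case: (lerP x t); case: (lerP (-t) y); case: (lerP y t)
  => //= *; lra.
Qed.

Lemma measurable_preimage d1 d2
  (T1 : measurableType d1) (T2 : measurableType d2)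
  (f : T1 -> T2) (A : set T2) :
  measurable_fun setT f -> measurable A -> measurable (f @^-1` A).
Proof. by move=> mf mA; rewrite -[_ @^-1` _]setTI; exact: mf. Qed.
Arguments measurable_preimage {d1 d2 T1 T2 f A}.

Section fcdf_theory.
Context {d} {T : measurableType d} {R : realType} (P : probability T R).
Implicit Types (U V W : T -> R) (t : R).

Lemma fin_num_fcdf W t : measurable_fun setT W -> fcdf P W t \is a fin_num.
Proof.
by move=> mW; apply: fin_num_measure; exact: measurable_preimage.
Qed.

Lemma fcdf_abs W t : fcdf P (fun w => `|W w|) t = P (W @^-1` `[-t, t]).
Proof.
by congr (P _); apply/seteqP; split=> w /=; rewrite !in_itv/= ler_norml.
Qed.

Lemma fcdf_abs_lt0 W t : t < 0 -> fcdf P (fun w => `|W w|) t = 0%E.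
Proof.
move=> t_lt0; rewrite fcdf_abs set_itv_ge ?preimage_set0 ?measure0//.
by rewrite bnd_simp; lra.
Qed.

Lemma eq_dist_comp {U V} {f : R -> R} : measurable_fun setT f ->
  eq_dist P U V -> eq_dist P (f \o U) (f \o V).
Proof. by move=> mf UV A mA; exact: UV (measurable_preimage mf mA). Qed.

Lemma indep2_comp {U V} {f g : R -> R} :
  measurable_fun setT f -> measurable_fun setT g ->
  indep2 P U V -> indep2 P (f \o U) (g \o V).
Proof.
move=> mf mg UV A B mA mB.
exact: UV (measurable_preimage mf mA) (measurable_preimage mg mB).
Qed.

(* The half-lines ]x, +oo[ generate the Borel sets and are closed under
   intersection, and their probabilities are 1 - F(x). *)
Lemma eq_dist_of_fcdf U V : measurable_fun setT U -> measurable_fun setT V ->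
  fcdf P U =1 fcdf P V -> eq_dist P U V.
Proof.
move=> mU mV UV A mA.
have := measure_unique (@measurable_realfun.RGenOInfty.G R)
  (fun k : nat => `](- k%:R), +oo[%classic) _ _ _ _
  (pushforward P U) (pushforward P V) _ _ A mA.
apply.
- exact: measurable_realfun.RGenOInfty.measurableE.
- move=> _ _ [x ->] [y ->]; exists (Num.max x y).
  by apply/seteqP; split=> z /=; rewrite !in_itv/= !andbT gt_max => /andP.
- by move=> k; exists (- k%:R).
- apply/seteqP; split=> // x _; exists (Num.truncn `|x|).+1 => //=.
  rewrite in_itv/= andbT ltrNl (le_lt_trans _ (truncnS_gt _))//.
  by rewrite -normrN ler_norm.
- move=> _ [x ->].
  change (P (U @^-1` `]x, +oo[) = P (V @^-1` `]x, +oo[)).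
  have tail W : W @^-1` `]x, +oo[ = ~` (W @^-1` `]-oo, x]).
    by apply/seteqP; split=> z /=; rewrite !in_itv/= andbT ltNge => /negP.
  rewrite !tail !probability_setC; try exact: measurable_preimage.
  by rewrite -!/(fcdf P _ x) UV.
- move=> k; rewrite (le_lt_trans (probability_le1 _ _)) ?ltry//.
  exact: measurable_preimage.
Qed.

Lemma st_midpoint {U V M} {F G : R -> R} :
  (forall t, fcdf P U t = (F t)%:E) -> (forall t, fcdf P V t = (G t)%:E) ->
  (forall t, fcdf P M t = ((F t + G t) / 2)%:E) ->
  st_le P U V ->
  [/\ st_le P U M, st_le P M V,
      st_lt P U M <-> st_lt P U V & st_lt P M V <-> st_lt P U V].
Proof.
move=> FU GV FM UV.
have GF t : G t <= F t by rewrite -lee_fin -FU -GV; exact: UV.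
have UM t : (fcdf P M t <= fcdf P U t)%E.
  by rewrite FM FU lee_fin; have := GF t; lra.
have MV t : (fcdf P V t <= fcdf P M t)%E.
  by rewrite FM GV lee_fin; have := GF t; lra.
have UM_lt t : (fcdf P M t < fcdf P U t)%E <-> (fcdf P V t < fcdf P U t)%E.
  by rewrite FM FU GV !lte_fin; split=> ?; lra.
have MV_lt t : (fcdf P V t < fcdf P M t)%E <-> (fcdf P V t < fcdf P U t)%E.
  by rewrite FM FU GV !lte_fin; split=> ?; lra.
split=> //; split=> -[_ [x lt_x]]; split=> //; exists x.
- exact/UM_lt.
- exact/UM_lt.
- exact/MV_lt.
- exact/MV_lt.
Qed.

Section symmetric.
Context {W : T -> R}.
Hypotheses (mW : measurable_fun setT W) (sW : eq_dist P W (fun w => - W w)).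

(* With a := F_|W|(t): P(W >= -t) = a + P(W > t) and, by symmetry,
   P(W >= -t) = 1 - P(W < -t) = 1 - P(W > t). *)
Lemma symmetric_tails {t} {a : R} : 0 <= t ->
  fcdf P (fun w => `|W w|) t = a%:E ->
  P (W @^-1` `]t, +oo[) = ((1 - a) / 2)%:E /\
  P (W @^-1` `[(- t)%R, +oo[) = ((1 + a) / 2)%:E.
Proof.
move=> t_ge0; rewrite fcdf_abs => Wa.
have mWi (i : interval R) : measurable (W @^-1` [set` i]).
  exact: measurable_preimage mW (measurable_itv i).
have split_ge : P (W @^-1` `[(- t)%R, +oo[) =
    (P (W @^-1` `[(- t)%R, t]) + P (W @^-1` `]t, +oo[))%E.
  have -> : W @^-1` `[(- t)%R, +oo[ =
            W @^-1` `[(- t)%R, t] `|` W @^-1` `]t, +oo[.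
    apply/seteqP; split=> w /=; rewrite !in_itv/= ?andbT.
      by move=> ?; case: (lerP (W w) t) => ?; [left|right]; lra.
    by case=> [/andP[? ?]|?]; lra.
  apply: measureU; [exact: mWi | exact: mWi |].
  apply/seteqP; split=> // w /=; rewrite !in_itv/= andbT.
  by move=> -[/andP[_ ?] ?]; lra.
have compl_ge : P (W @^-1` `[(- t)%R, +oo[) = (1 - P (W @^-1` `]t, +oo[))%E.
  have -> : W @^-1` `[(- t)%R, +oo[ = ~` (W @^-1` `]-oo, (- t)%R[).
    by apply/seteqP; split=> w /=; rewrite !in_itv/= andbT leNgt => /negP.
  rewrite probability_setC ?mWi// (sW _ (measurable_itv _)); congr (_ - P _)%E.
  by apply/seteqP; split=> w /=; rewrite !in_itv/= andbT ltrNr.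
have finP (i : interval R) : exists r : R, P (W @^-1` [set` i]) = r%:E.
  exists (fine (P (W @^-1` [set` i]))).
  by rewrite fineK// fin_num_measure//; exact: mWi.
move: split_ge compl_ge; rewrite Wa.
have [g ->] := finP `]t, +oo[; have [h ->] := finP `[(- t)%R, +oo[.
rewrite /= -EFinD -EFinB => -[ge_split] -[ge_compl].
by split; congr EFin; lra.
Qed.

End symmetric.

Section independent_symmetric.
Context {X Y : T -> R}.
Hypotheses (mX : measurable_fun setT X) (mY : measurable_fun setT Y).
Hypotheses (XY : indep2 P X Y)
  (sX : eq_dist P X (fun w => - X w)) (sY : eq_dist P Y (fun w => - Y w)).
Context {F G : R -> R}.
Hypotheses (FX : forall t, fcdf P (fun w => `|X w|) t = (F t)%:E)
  (GY : forall t, fcdf P (fun w => `|Y w|) t = (G t)%:E).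

Lemma fcdf_abs_min t :
  fcdf P (fun w => `|Num.min (X w) (Y w)|) t = ((F t + G t) / 2)%:E.
Proof.
have [t_lt0|t_ge0] := ltP t 0.
  have := FX t; have := GY t; rewrite !fcdf_abs_lt0// => -[<-] -[<-].
  by rewrite addr0 mul0r.
have mXi (i : interval R) : measurable (X @^-1` [set` i]).
  exact: measurable_preimage mX (measurable_itv i).
have mYi (i : interval R) : measurable (Y @^-1` [set` i]).
  exact: measurable_preimage mY (measurable_itv i).
have [gtX _] := symmetric_tails mX sX t_ge0 (FX t).
have [_ geY] := symmetric_tails mY sY t_ge0 (GY t).
have -> : fcdf P (fun w => `|Num.min (X w) (Y w)|) t =
    P ((X @^-1` `[(- t)%R, t] `&` Y @^-1` `[(- t)%R, +oo[) `|`
       (X @^-1` `]t, +oo[ `&` Y @^-1` `[(- t)%R, t])).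
  congr (P _); apply/seteqP; split=> w /=; rewrite !in_itv/= ?andbT abs_min_le.
    by case/orP=> /andP[? ?]; [left|right].
  by case=> -[-> ->] //=; rewrite orbT.
set E1 := X @^-1` _ `&` _; set E2 := X @^-1` _ `&` _.
rewrite measureU; last 3 first.
- by apply: measurableI; [exact: mXi|exact: mYi].
- by apply: measurableI; [exact: mXi|exact: mYi].
- apply/seteqP; split=> // w; rewrite /E1 /E2 /= !in_itv/= ?andbT.
  by move=> -[[/andP[_ ?] _] [? _]]; lra.
(* refold the measure coercion introduced by [measureU], so that [XY] matches *)
change (P E1 + P E2 = ((F t + G t) / 2)%:E)%E.
rewrite !(XY _ _ (measurable_itv _) (measurable_itv _)) gtX geY -!fcdf_abs.
rewrite FX GY -!EFinM -EFinD.
by congr EFin; ring.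
Qed.

End independent_symmetric.

Lemma fcdf_abs_max {X Y} {F G : R -> R} :
  measurable_fun setT X -> measurable_fun setT Y -> indep2 P X Y ->
  eq_dist P X (fun w => - X w) -> eq_dist P Y (fun w => - Y w) ->
  (forall t, fcdf P (fun w => `|X w|) t = (F t)%:E) ->
  (forall t, fcdf P (fun w => `|Y w|) t = (G t)%:E) ->
  forall t, fcdf P (fun w => `|Num.max (X w) (Y w)|) t = ((F t + G t) / 2)%:E.
Proof.
move=> mX mY XY sX sY FX GY t.
have mN := @measurable_realfun.oppr_measurable R setT.
have absN W : (fun w => `|(-%R \o W) w|) = (fun w => `|W w|).
  by apply/funext => w; exact: normrN.
have -> : (fun w => `|Num.max (X w) (Y w)|) =
          (fun w => `|Num.min (- X w) (- Y w)|).
  by apply/funext => w; rewrite -normrN oppr_max.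
have mNX := measurableT_comp mN mX; have mNY := measurableT_comp mN mY.
have sNX : eq_dist P (-%R \o X) (fun w => - (-%R \o X) w) := eq_dist_comp mN sX.
have sNY : eq_dist P (-%R \o Y) (fun w => - (-%R \o Y) w) := eq_dist_comp mN sY.
have FNX s : fcdf P (fun w => `|(-%R \o X) w|) s = (F s)%:E by rewrite absN.
have GNY s : fcdf P (fun w => `|(-%R \o Y) w|) s = (G s)%:E by rewrite absN.
exact: (fcdf_abs_min mNX mNY (indep2_comp mN mN XY) sNX sNY FNX GNY).
Qed.

End fcdf_theory.

Theorem theorem5p1 (d : measure_display) (T : measurableType d) (R : realType)
  (P : probability T R) (X Y : {RV P >-> R}) :
  indep2 P X Y ->
  eq_dist P X (fun w => - X w) ->
  eq_dist P Y (fun w => - Y w) ->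
  st_le P (fun w => `|X w|) (fun w => `|Y w|) ->
  [/\ st_le P (fun w => `|X w|) (fun w => `|Num.min (X w) (Y w)|),
      eq_dist P (fun w => `|Num.min (X w) (Y w)|) (fun w => `|Num.max (X w) (Y w)|),
      st_le P (fun w => `|Num.max (X w) (Y w)|) (fun w => `|Y w|),
      (st_lt P (fun w => `|X w|) (fun w => `|Num.min (X w) (Y w)|) <->
         st_lt P (fun w => `|X w|) (fun w => `|Y w|))
    & (st_lt P (fun w => `|Num.max (X w) (Y w)|) (fun w => `|Y w|) <->
         st_lt P (fun w => `|X w|) (fun w => `|Y w|))].
Proof.
move=> XY sX sY le_XY.
have mX := measurable_funPT X; have mY := measurable_funPT Y.
have mabs := measurableT_comp (@measurable_realfun.normr_measurable R setT).
have FX t : fcdf P (fun w => `|X w|) t = (fine (fcdf P (fun w => `|X w|) t))%:E.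
  by rewrite fineK// fin_num_fcdf//; exact: mabs mX.
have GY t : fcdf P (fun w => `|Y w|) t = (fine (fcdf P (fun w => `|Y w|) t))%:E.
  by rewrite fineK// fin_num_fcdf//; exact: mabs mY.
have minE := fcdf_abs_min P mX mY XY sX sY FX GY.
have maxE := fcdf_abs_max P mX mY XY sX sY FX GY.
have [le_X_min _ lt_X_min _] := st_midpoint P FX GY minE le_XY.
have [_ le_max_Y _ lt_max_Y] := st_midpoint P FX GY maxE le_XY.
split=> //; apply: (eq_dist_of_fcdf P) => [||t]; last by rewrite minE maxE.
- exact: mabs (measurable_realfun.measurable_minr mX mY).
- exact: mabs (measurable_realfun.measurable_maxr mX mY).
Qed.
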